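(* Let $n_t\ge 1$. The product $\prod_{i=1}^{n_t} C^2X_{t_i}$ of $n_t$ Toffoli gates that share the same two control qubits $c_1,c_2$ and have pairwise distinct target qubits $t_1,\dots,t_{n_t}$ (all distinct from the controls) can be implemented exactly, without auxiliary qubits, by a circuit of single-qubit gates and $2n_t+4$ CNOT gates.
   Context: $C^2X_{t}$ denotes the Toffoli gate: it flips target qubit $t$ if and only if both control qubits are in state $|1\rangle$. *)

From mathcomp Require Import all_boot all_algebra.
From mathcomp Require Import complex.
From mathcomp Require Import Rstruct.
Set Implicit Arguments. Unset Strict Implicit. Unset Printing Implicit Defensive.
Import GRing.Theory Num.Theory.
Local Open Scope ring_scope.

Definition C : numClosedFieldType := complex Rdefinitions.R.

(* An m-qubit register: computational basis states are indexed by
   i : 'I_(2^m); qubit q of basis state i is bit q of the binary expansion of i. *)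
Definition qbit (m : nat) (q : 'I_m) (i : 'I_(2 ^ m)) : bool := odd (i %/ 2 ^ q).

Definition bit_ord (b : bool) : 'I_2 := inord (nat_of_bool b).

Definition unitary2 (U : 'M[C]_2) : Prop := U *m (map_mx Num.conj U)^T = 1%:M.

Definition single_mx (m : nat) (q : 'I_m) (U : 'M[C]_2) : 'M[C]_(2 ^ m) :=
  \matrix_(i, j)
    (if [forall p : 'I_m, (p != q) ==> (qbit p i == qbit p j)]
     then U (bit_ord (qbit q i)) (bit_ord (qbit q j)) else 0).

Definition cnot_mx (m : nat) (c t : 'I_m) : 'M[C]_(2 ^ m) :=
  \matrix_(i, j)
    ([forall p : 'I_m,
        qbit p i == (if p == t then qbit t j (+) qbit c j else qbit p j)] %:R).

Definition toffoli_mx (m : nat) (c1 c2 t : 'I_m) : 'M[C]_(2 ^ m) :=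
  \matrix_(i, j)
    ([forall p : 'I_m,
        qbit p i == (if p == t then qbit t j (+) (qbit c1 j && qbit c2 j)
                     else qbit p j)] %:R).

Inductive gate (m : nat) : Type :=
  | G1 of 'I_m & 'M[C]_2
  | GCX of 'I_m & 'I_m.        (* CNOT with control c, target t *)

Definition gate_ok (m : nat) (g : gate m) : Prop :=
  match g with
  | G1 _ U => unitary2 U
  | GCX c t => c != t
  end.

Definition gate_qubits (m : nat) (g : gate m) : seq 'I_m :=
  match g with
  | G1 q _ => [:: q]
  | GCX c t => [:: c; t]
  end.

Definition gate_mx (m : nat) (g : gate m) : 'M[C]_(2 ^ m) :=
  match g with
  | G1 q U => single_mx q U
  | GCX c t => cnot_mx c t
  end.

Definition is_cnot (m : nat) (g : gate m) : bool :=
  if g is GCX _ _ then true else false.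

(* A circuit is a list of gates applied left to right: the first gate of the
   list acts first, so circuit_mx [:: g1; ...; gk] = gk *m ... *m g1. *)
Fixpoint circuit_mx (m : nat) (gs : seq (gate m)) : 'M[C]_(2 ^ m) :=
  match gs with
  | [::] => 1%:M
  | g :: gs' => circuit_mx gs' *m gate_mx g
  end.

Definition cnot_count (m : nat) (gs : seq (gate m)) : nat := count (@is_cnot m) gs.

Definition multi_toffoli_mx (m : nat) (c1 c2 : 'I_m) (ts : seq 'I_m) : 'M[C]_(2 ^ m) :=
  foldr (fun t M => toffoli_mx c1 c2 t *m M) 1%:M ts.

From mathcomp Require Import all_boot all_algebra.
From mathcomp Require Import complex.
From mathcomp Require Import ring zify.
From Stdlib Require Import FunctionalExtensionality.
Set Implicit Arguments. Unset Strict Implicit. Unset Printing Implicit Defensive.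
Import GRing.Theory Num.Theory.

(** Conjugating by Hadamard gates on the target turns a Toffoli gate C^2X_t
    into the diagonal gate CCZ_t, which multiplies the basis state x by
    (-1)^(x_c1 x_c2 x_t).  These diagonal gates commute, so the product of the
    Toffoli gates is H D H, where H applies a Hadamard gate to every target and
    D multiplies x by (-1)^(x_c1 x_c2 (x_t1 + ... + x_tn)), the sum taken mod 2.
    D is realised by fanning the parity into t1 with n - 1 CNOTs, applying a
    single CCZ on (c1, c2, t1), and uncomputing the parity with the same CNOTs.
    The CCZ costs 6 CNOTs in the standard T-gate circuit, so the whole circuit
    uses 2 (n - 1) + 6 = 2 n + 4 CNOTs. *)

Lemma binary_digits_inj (m i j : nat) : (i < 2 ^ m)%N -> (j < 2 ^ m)%N ->
  (forall p, (p < m)%N -> odd (i %/ 2 ^ p) = odd (j %/ 2 ^ p)) -> i = j.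
Proof.
elim: m i j => [|m IHm] i j; first by rewrite !ltnS !leqn0 => /eqP-> /eqP->.
move=> lt_i lt_j eq_digits.
have eq_odd : odd i = odd j by have := eq_digits 0%N isT; rewrite !divn1.
have eq_half : i %/ 2 = j %/ 2.
  apply: IHm; rewrite ?ltn_divLR -?expnSr // => p lt_pm.
  by rewrite -!divnMA -expnS; apply: eq_digits.
by rewrite (divn_eq i 2) (divn_eq j 2) !modn2 eq_odd eq_half.
Qed.

Section Qubits.

Variable m : nat.
Implicit Types (p q : 'I_m) (i j k : 'I_(2 ^ m)).

Lemma qbit_inj i j : (forall p, qbit p i = qbit p j) -> i = j.
Proof.
move=> eq_ij; apply/val_inj/(binary_digits_inj (ltn_ord i) (ltn_ord j)).
by move=> p lt_pm; apply: (eq_ij (Ordinal lt_pm)).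
Qed.

Lemma eq_qbitE i j : [forall p, qbit p i == qbit p j] = (i == j).
Proof. by apply/forallP/eqP => [eq_ij|->//]; apply: qbit_inj => p; apply/eqP. Qed.

Definition qbits i : {ffun 'I_m -> bool} := [ffun p => qbit p i].

Lemma qbits_surj (f : {ffun 'I_m -> bool}) : exists k, qbits k = f.
Proof.
have qbits_inj : injective qbits.
  by move=> i j /ffunP eq_ij; apply: qbit_inj => p; have := eq_ij p; rewrite !ffunE.
have [g _ qbitsK] : bijective qbits.
  by apply: inj_card_bij qbits_inj _; rewrite card_ffun card_bool !card_ord.
by exists (g f); rewrite qbitsK.
Qed.

(* The default [i] is never returned, since [qbits] is onto. *)
Definition set_qbit i q (b : bool) : 'I_(2 ^ m) :=
  odflt i [pick k | qbits k == [ffun p => if p == q then b else qbit p i]].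

Lemma qbit_set_qbit i q b p :
  qbit p (set_qbit i q b) = if p == q then b else qbit p i.
Proof.
rewrite /set_qbit; case: pickP => [k /eqP/ffunP/(_ p)|none].
  by rewrite !ffunE.
have [k qbits_k] := qbits_surj [ffun p => if p == q then b else qbit p i].
by have := none k; rewrite qbits_k eqxx.
Qed.

Lemma set_qbit_id i q : set_qbit i q (qbit q i) = i.
Proof. by apply: qbit_inj => p; rewrite qbit_set_qbit; case: eqP => [->|]. Qed.

Lemma set_set_qbit i q b b' : set_qbit (set_qbit i q b) q b' = set_qbit i q b'.
Proof. by apply: qbit_inj => p; rewrite !qbit_set_qbit; case: eqP. Qed.

Lemma set_qbitC i q s b b' : q != s ->
  set_qbit (set_qbit i q b) s b' = set_qbit (set_qbit i s b') q b.
Proof.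
move=> neq_qs; apply: qbit_inj => p; rewrite !qbit_set_qbit.
by case: (eqVneq p s) => [->|//]; rewrite eq_sym (negbTE neq_qs).
Qed.

Definition indep_qbit (T : Type) q (f : 'I_(2 ^ m) -> T) :=
  forall i b, f (set_qbit i q b) = f i.

Lemma indep_qbit_qbit p q : p != q -> indep_qbit q (qbit p).
Proof. by move=> /negbTE neq_pq i b; rewrite qbit_set_qbit neq_pq. Qed.

Definition xor_qbit q (b : 'I_(2 ^ m) -> bool) i := set_qbit i q (qbit q i (+) b i).

Lemma qbit_xor_qbit q b i p :
  qbit p (xor_qbit q b i) = if p == q then qbit q i (+) b i else qbit p i.
Proof. exact: qbit_set_qbit. Qed.

Lemma xor_qbit_comp q (b b' : 'I_(2 ^ m) -> bool) i : indep_qbit q b ->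
  xor_qbit q b (xor_qbit q b' i) = xor_qbit q (fun k => b' k (+) b k) i.
Proof.
move=> indep_b; apply: qbit_inj => p; rewrite !qbit_xor_qbit eqxx.
by rewrite [b _]indep_b addbA; case: eqP.
Qed.

Lemma xor_qbitK q b : indep_qbit q b -> involutive (xor_qbit q b).
Proof.
by move=> indep_b i; rewrite xor_qbit_comp // /xor_qbit addbb addbF set_qbit_id.
Qed.

Definition parity (s : seq 'I_m) i : bool := \big[addb/false]_(p <- s) qbit p i.

Lemma indep_parity q s : q \notin s -> indep_qbit q (parity s).
Proof.
move=> q_notin_s i b; apply: eq_big_seq => p p_in_s.
by apply: indep_qbit_qbit; apply: contraNneq q_notin_s => <-.
Qed.

End Qubits.

Local Open Scope ring_scope.

(* On [seq], [++] is [cat] and not [List.app], so [List.Forall_app] does not apply. *)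
Lemma Forall_cat (T : Type) (P : T -> Prop) (s1 s2 : seq T) :
  List.Forall P s1 -> List.Forall P s2 -> List.Forall P (s1 ++ s2).
Proof. by elim=> //= x s1' Px _ IHs1 Ps2; constructor; last apply: IHs1. Qed.

Lemma Forall_map_in (T : eqType) U (f : T -> U) (P : U -> Prop) (s : seq T) :
  {in s, forall x, P (f x)} -> List.Forall P (map f s).
Proof.
elim: s => [|x s IHs] Pf; constructor; first by apply: Pf; rewrite mem_head.
by apply: IHs => y y_in; apply: Pf; rewrite inE y_in orbT.
Qed.

Notation vec m := ('I_(2 ^ m) -> C).

Section Operators.

Variable m : nat.
Implicit Types (q s t : 'I_m) (i j k : 'I_(2 ^ m)) (v : vec m) (M : 'M[C]_(2 ^ m)).

Definition mxv M v : vec m := fun i => \sum_k M i k * v k.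

Lemma mxv_mul M M' v : mxv (M *m M') v = mxv M (mxv M' v).
Proof.
apply: functional_extensionality => i; rewrite /mxv.
under eq_bigr do rewrite mxE mulr_suml.
rewrite exchange_big; apply: eq_bigr => l _; rewrite mulr_sumr.
by apply: eq_bigr => k _; rewrite mulrA.
Qed.

Lemma mxv_perm M (f : 'I_(2 ^ m) -> 'I_(2 ^ m)) v :
  (forall i k, M i k = (k == f i)%:R) -> mxv M v = v \o f.
Proof.
move=> M_perm; apply: functional_extensionality => i /=.
rewrite /mxv (bigD1 (f i)) // M_perm eqxx mul1r big1 ?Monoid.mulm1 // => k /negbTE neq_k.
by rewrite M_perm neq_k mul0r.
Qed.

Lemma mxv_delta M i j : mxv M (fun k => (k == j)%:R) i = M i j.
Proof.
rewrite /mxv (bigD1 j) // eqxx mulr1 big1 ?Monoid.mulm1 // => k /negbTE neq_kj.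
by rewrite neq_kj mulr0.
Qed.

Lemma mxv1 v : mxv 1%:M v = v.
Proof. by apply: mxv_perm => i k; rewrite mxE eq_sym. Qed.

Lemma mxv_inj M M' : (forall v, mxv M v = mxv M' v) -> M = M'.
Proof. by move=> eq_mxv; apply/matrixP => i j; rewrite -!mxv_delta eq_mxv. Qed.

Lemma controlled_x_entry t (b : 'I_(2 ^ m) -> bool) i k : indep_qbit t b ->
  [forall p, qbit p i == (if p == t then qbit t k (+) b k else qbit p k)]
  = (k == xor_qbit t b i).
Proof.
move=> indep_b; rewrite -(inv_eq (xor_qbitK indep_b)) eq_sym -eq_qbitE.
by apply: eq_forallb => p; rewrite qbit_xor_qbit.
Qed.

Lemma mxv_cnot_mx c t v : c != t -> mxv (cnot_mx c t) v = v \o xor_qbit t (qbit c).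
Proof.
move=> neq_ct; apply: mxv_perm => i k.
by rewrite mxE controlled_x_entry //; apply: indep_qbit_qbit.
Qed.

Lemma mxv_toffoli_mx c1 c2 t v : c1 != t -> c2 != t ->
  mxv (toffoli_mx c1 c2 t) v = v \o xor_qbit t (fun i => qbit c1 i && qbit c2 i).
Proof.
move=> neq_c1t neq_c2t; apply: mxv_perm => i k.
rewrite mxE (controlled_x_entry (b := fun i => qbit c1 i && qbit c2 i)) // => j b.
by rewrite !indep_qbit_qbit.
Qed.

Definition single_op q (U : 'M[C]_2) v : vec m := fun i =>
  U (bit_ord (qbit q i)) (bit_ord false) * v (set_qbit i q false) +
  U (bit_ord (qbit q i)) (bit_ord true) * v (set_qbit i q true).

Lemma mxv_single_mx q U v : mxv (single_mx q U) v = single_op q U v.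
Proof.
apply: functional_extensionality => i; rewrite /mxv /single_op.
have set_qbit_neq : set_qbit i q false != set_qbit i q true.
  by apply/eqP => /(congr1 (qbit q)); rewrite !qbit_set_qbit eqxx.
rewrite (bigD1 (set_qbit i q false)) // (bigD1 (set_qbit i q true)); last first.
  by rewrite eq_sym set_qbit_neq.
have agree b : [forall p, (p != q) ==> (qbit p i == qbit p (set_qbit i q b))].
  by apply/forallP => p; apply/implyP => /negbTE neq_pq; rewrite qbit_set_qbit neq_pq.
rewrite !mxE !agree !qbit_set_qbit !eqxx big1 ?Monoid.mulm1 // => k /andP[neq_k1 neq_k0].
rewrite mxE; case: ifP => [/forallP agree_k|_]; last by rewrite mul0r.
suff eq_k : k = set_qbit i q (qbit q k).
  by move: neq_k0 neq_k1; rewrite eq_k; case: (qbit q k); rewrite eqxx.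
apply: qbit_inj => p; rewrite qbit_set_qbit; case: eqP => [->//|/eqP neq_pq].
by apply/esym/eqP; apply: (implyP (agree_k p)).
Qed.

Lemma single_opC q s U V v : q != s ->
  single_op q U (single_op s V v) = single_op s V (single_op q U v).
Proof.
move=> neq_qs; apply: functional_extensionality => i; rewrite /single_op.
rewrite !qbit_set_qbit (negbTE neq_qs) eq_sym (negbTE neq_qs) !(set_qbitC _ _ _ neq_qs).
by ring.
Qed.

Definition diag_op (d v : vec m) : vec m := fun i => d i * v i.

Lemma diag_opA (d d' : vec m) v :
  diag_op d (diag_op d' v) = diag_op (diag_op d d') v.
Proof. by apply: functional_extensionality => i; rewrite /diag_op mulrA. Qed.

Lemma diag_single_opC q U (d : vec m) v : indep_qbit q d ->
  diag_op d (single_op q U v) = single_op q U (diag_op d v).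
Proof.
move=> indep_d; apply: functional_extensionality => i.
rewrite /diag_op /single_op !indep_d.
by ring.
Qed.

Lemma conj_perm_diag_op (f : 'I_(2 ^ m) -> 'I_(2 ^ m)) (d : vec m) v : involutive f ->
  diag_op d (v \o f) \o f = diag_op (d \o f) v.
Proof. by move=> fK; apply: functional_extensionality => i; rewrite /diag_op /= fK. Qed.

End Operators.

Lemma bit_ordK (b : bool) : bit_ord b = b :> nat.
Proof. by case: b; apply: inordK. Qed.

Lemma bit_ord_eq x y : (bit_ord x == bit_ord y) = (x == y).
Proof. by rewrite -val_eqE /= !bit_ordK; case: x; case: y. Qed.

Lemma mx2_bitP (A B : 'M[C]_2) :
  (forall x y, A (bit_ord x) (bit_ord y) = B (bit_ord x) (bit_ord y)) -> A = B.
Proof.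
have bit_ordP (a : 'I_2) : a = bit_ord (val a == 1%N).
  by apply: val_inj => /=; rewrite bit_ordK; case: a => [[|[|]]].
by move=> eqAB; apply/matrixP => a b; rewrite [a]bit_ordP [b]bit_ordP eqAB.
Qed.

Lemma mulmx2_bit (A B : 'M[C]_2) x y : (A *m B) (bit_ord x) (bit_ord y) =
  A (bit_ord x) (bit_ord false) * B (bit_ord false) (bit_ord y) +
  A (bit_ord x) (bit_ord true) * B (bit_ord true) (bit_ord y).
Proof.
rewrite mxE !big_ord_recl big_ord0 addr0.
by congr (A _ _ * B _ _ + A _ _ * B _ _); apply: val_inj => /=; rewrite bit_ordK.
Qed.

Lemma unitary2_bit U : unitary2 U <-> forall x y,
  U (bit_ord x) (bit_ord false) * (U (bit_ord y) (bit_ord false))^* +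
  U (bit_ord x) (bit_ord true) * (U (bit_ord y) (bit_ord true))^* = (x == y)%:R.
Proof.
rewrite /unitary2; split=> [unitU x y|unitU].
  have := congr1 (fun A : 'M[C]_2 => A (bit_ord x) (bit_ord y)) unitU.
  by rewrite mulmx2_bit !mxE bit_ord_eq.
by apply: mx2_bitP => x y; rewrite /unitary2 mulmx2_bit !mxE bit_ord_eq unitU.
Qed.

Definition phase_mx (z : C) : 'M[C]_2 :=
  \matrix_(a, b) (if a == b then z ^+ a else 0).

Lemma phase_mx_bit z x y :
  phase_mx z (bit_ord x) (bit_ord y) = if x == y then z ^+ x else 0.
Proof. by rewrite mxE bit_ord_eq bit_ordK; case: eqP => [->|]. Qed.

Lemma single_op_phase m (q : 'I_m) z v :
  single_op q (phase_mx z) v = diag_op (fun i => z ^+ qbit q i) v.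
Proof.
apply: functional_extensionality => i; rewrite /single_op /diag_op !phase_mx_bit.
have := set_qbit_id i q; case: (qbit q i) => ->.
  by rewrite mul0r add0r.
by rewrite mul0r addr0.
Qed.

Lemma phase_mx_unitary z : z * z^* = 1 -> unitary2 (phase_mx z).
Proof.
move=> z_unit; apply/unitary2_bit => x y; rewrite !phase_mx_bit.
by case: x; case: y; rewrite ?rmorph0 ?(mul0r, mulr0, addr0, add0r, expr0, expr1, rmorph1, mulr1).
Qed.

Definition hadamard_mx : 'M[C]_2 :=
  \matrix_(a, b) ((-1) ^+ (a * b)%N * sqrtC 2^-1).

Lemma hadamard_mx_bit x y :
  hadamard_mx (bit_ord x) (bit_ord y) = (-1) ^+ (x && y) * sqrtC 2^-1.
Proof. by rewrite mxE !bit_ordK mulnb. Qed.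

Lemma sqrt_half_sqr : sqrtC 2^-1 * sqrtC 2^-1 = 2^-1 :> C.
Proof. by rewrite -expr2 sqrtCK. Qed.

Lemma half_add_half : 2^-1 + 2^-1 = 1 :> C.
Proof. by field. Qed.

Lemma hadamard_mx_unitary : unitary2 hadamard_mx.
Proof.
have real_h : (sqrtC 2^-1 : C) \is Num.real.
  by rewrite sqrtC_real // invr_ge0 ler0n.
have conj_h := conj_Creal real_h.
have conj_Nh : (- sqrtC 2^-1 : C)^* = - sqrtC 2^-1 by apply: conj_Creal; rewrite rpredN.
apply/unitary2_bit => x y; rewrite !hadamard_mx_bit !andbF !andbT expr0 !mul1r conj_h.
case: x; case: y; rewrite ?(expr0, expr1, mul1r, mulN1r, conj_h, conj_Nh, mulrNN, mulrN, mulNr).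
all: by rewrite sqrt_half_sqr ?subrr ?opprK ?half_add_half.
Qed.

Lemma hadamard_conj_xor m (t : 'I_m) (b : 'I_(2 ^ m) -> bool) v : indep_qbit t b ->
  v \o xor_qbit t b = single_op t hadamard_mx
    (diag_op (fun i => (-1) ^+ (b i && qbit t i)) (single_op t hadamard_mx v)).
Proof.
move=> indep_b; apply: functional_extensionality => i.
rewrite /single_op /diag_op /xor_qbit !qbit_set_qbit eqxx !set_set_qbit !indep_b.
rewrite !hadamard_mx_bit !andbF !andbT expr0 !mul1r.
rewrite [LHS]/=; case: (qbit t i); case: (b i); rewrite ?(expr0, expr1, mul1r, mulN1r).
all: rewrite !(mulrDr, mulrN, mulNr, opprK, opprD, mulrA, sqrt_half_sqr).
all: by field.
Qed.

Definition omega : C := sqrtC (sqrtC (-1)).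

Lemma omega4 : omega ^+ 4 = -1.
Proof. by rewrite (exprM omega 2 2) !sqrtCK. Qed.

Lemma omega_modn8 n : omega ^+ n = omega ^+ (n %% 8).
Proof.
have omega8 : omega ^+ 8 = 1 by rewrite (exprM omega 4 2) omega4 sqrrN expr1n.
by rewrite {1}(divn_eq n 8) exprD mulnC exprM omega8 expr1n mul1r.
Qed.

Lemma omega_unitary n : omega ^+ n * (omega ^+ n)^* = 1.
Proof.
suff norm_omega : `|omega| = 1 by rewrite rmorphXn -exprMn -normCK norm_omega !expr1n.
by apply/eqP; rewrite -(@pexpr_eq1 _ _ 4) // -normrX omega4 normrN normr1 eqxx.
Qed.

Section Circuits.

Variable m : nat.
Implicit Types (c q s t : 'I_m) (ss ts : seq 'I_m) (g : gate m) (gs : seq (gate m)).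
Implicit Types (v : vec m).

Definition gate_op g : vec m -> vec m :=
  match g with
  | G1 q U => single_op q U
  | GCX c t => fun v => v \o xor_qbit t (qbit c)
  end.

Fixpoint circuit_op gs v : vec m :=
  if gs is g :: gs' then circuit_op gs' (gate_op g v) else v.

Lemma circuit_op_cat gs gs' v :
  circuit_op (gs ++ gs') v = circuit_op gs' (circuit_op gs v).
Proof. by elim: gs v => //= g gs IHgs v. Qed.

Lemma mxv_circuit_mx gs v : (forall g, List.In g gs -> gate_ok g) ->
  mxv (circuit_mx gs) v = circuit_op gs v.
Proof.
elim: gs v => [|g gs IHgs] v gs_ok /=; first exact: mxv1.
rewrite mxv_mul IHgs => [|g' g'_in]; last by apply: gs_ok; right.
have := gs_ok g (or_introl erefl); case: g {gs_ok} => [q U _|c t neq_ct] /=.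
  by rewrite mxv_single_mx.
by rewrite mxv_cnot_mx.
Qed.

Definition hadamards ts : seq (gate m) := [seq G1 t hadamard_mx | t <- ts].

Lemma circuit_op_hadamards_cons t ts v :
  circuit_op (hadamards (t :: ts)) v = circuit_op (hadamards ts) (single_op t hadamard_mx v).
Proof. by []. Qed.

Lemma hadamards_comm (F : vec m -> vec m) ts v :
  (forall t w, t \in ts -> F (single_op t hadamard_mx w) = single_op t hadamard_mx (F w)) ->
  F (circuit_op (hadamards ts) v) = circuit_op (hadamards ts) (F v).
Proof.
elim: ts v => [|t ts IHts] v //= F_comm.
rewrite IHts => [|s w s_in]; last by apply: F_comm; rewrite inE s_in orbT.
by rewrite F_comm ?mem_head.
Qed.

Definition ccz_sign c1 c2 ts : vec m :=
  fun i => (-1) ^+ (qbit c1 i && qbit c2 i && parity ts i).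

Lemma ccz_sign_cons c1 c2 t ts :
  ccz_sign c1 c2 (t :: ts) = diag_op (ccz_sign c1 c2 [:: t]) (ccz_sign c1 c2 ts).
Proof.
apply: functional_extensionality => i.
by rewrite /diag_op /ccz_sign /parity big_cons big_seq1 -signr_addb -andb_addr.
Qed.

Lemma indep_ccz_sign c1 c2 ts q : c1 != q -> c2 != q -> q \notin ts ->
  indep_qbit q (ccz_sign c1 c2 ts).
Proof.
move=> neq_c1q neq_c2q q_notin i b.
by rewrite /ccz_sign !indep_qbit_qbit // indep_parity.
Qed.

Lemma mxv_toffoli_hadamard c1 c2 t v : c1 != t -> c2 != t ->
  mxv (toffoli_mx c1 c2 t) v =
  single_op t hadamard_mx (diag_op (ccz_sign c1 c2 [:: t]) (single_op t hadamard_mx v)).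
Proof.
move=> neq_c1t neq_c2t; rewrite mxv_toffoli_mx // hadamard_conj_xor => [|i b].
  by congr (single_op _ _ (diag_op _ _)); apply: functional_extensionality => i;
     rewrite /ccz_sign /parity big_seq1.
by rewrite !indep_qbit_qbit.
Qed.

Lemma mxv_multi_toffoli c1 c2 ts v : uniq ts -> c1 \notin ts -> c2 \notin ts ->
  mxv (multi_toffoli_mx c1 c2 ts) v =
  circuit_op (hadamards ts) (diag_op (ccz_sign c1 c2 ts) (circuit_op (hadamards ts) v)).
Proof.
elim: ts v => [|t ts IHts] v.
  move=> _ _ _; rewrite mxv1 /=; apply: functional_extensionality => i.
  by rewrite /diag_op /ccz_sign /parity big_nil andbF mul1r.
rewrite cons_uniq !inE !negb_or => /andP[t_notin uniq_ts].
move=> /andP[neq_c1t c1_notin] /andP[neq_c2t c2_notin].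
rewrite mxv_mul IHts // mxv_toffoli_hadamard // !circuit_op_hadamards_cons.
have HtHT w : single_op t hadamard_mx (circuit_op (hadamards ts) w) =
              circuit_op (hadamards ts) (single_op t hadamard_mx w).
  apply: hadamards_comm => s w' s_in; apply: single_opC.
  by apply: contraNneq t_notin => ->.
have DtHT w : diag_op (ccz_sign c1 c2 [:: t]) (circuit_op (hadamards ts) w) =
              circuit_op (hadamards ts) (diag_op (ccz_sign c1 c2 [:: t]) w).
  apply: hadamards_comm => s w' s_in; apply/diag_single_opC/indep_ccz_sign.
  - by apply: contraNneq c1_notin => ->.
  - by apply: contraNneq c2_notin => ->.
  - by rewrite mem_seq1; apply: contraNneq t_notin => <-.
have HtDts w : single_op t hadamard_mx (diag_op (ccz_sign c1 c2 ts) w) =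
               diag_op (ccz_sign c1 c2 ts) (single_op t hadamard_mx w).
  by rewrite diag_single_opC //; apply: indep_ccz_sign.
by rewrite HtHT DtHT HtHT HtDts HtHT diag_opA -ccz_sign_cons.
Qed.

Definition cnot_fan_in ss t : seq (gate m) := [seq GCX s t | s <- ss].

Lemma circuit_op_fan_in ss t v : t \notin ss ->
  circuit_op (cnot_fan_in ss t) v = v \o xor_qbit t (parity ss).
Proof.
elim: ss v => [|s ss IHss] v.
  move=> _; apply: functional_extensionality => i /=.
  by rewrite /xor_qbit /parity big_nil addbF set_qbit_id.
rewrite inE negb_or => /andP[neq_ts t_notin] /=; rewrite IHss //.
apply: functional_extensionality => i /=; rewrite xor_qbit_comp; last first.
  by apply: indep_qbit_qbit; rewrite eq_sym.
congr (v (xor_qbit _ _ i)); apply: functional_extensionality => k.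
by rewrite /parity big_cons addbC.
Qed.

(* With T = diag(1, omega), omega = e^(i pi/4), and T^-1 = diag(1, omega^7), the
   CNOTs route x_t + x_c2, x_t + x_c1 + x_c2, x_t + x_c1 and x_c1 + x_c2 through
   the phase gates; the identity 4xyz = x + y + z - (x+y) - (x+z) - (y+z) + (x+y+z)
   (parenthesised sums mod 2) then gives the phase omega^(4xyz) = (-1)^(xyz). *)
Definition ccz_circuit c1 c2 t : seq (gate m) :=
  let T := phase_mx omega in let Tdg := phase_mx (omega ^+ 7) in
  [:: G1 c1 T; G1 c2 T; G1 t T; GCX c2 t; G1 t Tdg; GCX c1 t; G1 t T; GCX c2 t;
      G1 t Tdg; GCX c1 t; GCX c1 c2; G1 c2 Tdg; GCX c1 c2].

Lemma circuit_op_ccz c1 c2 t v : c1 != c2 -> c1 != t -> c2 != t ->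
  circuit_op (ccz_circuit c1 c2 t) v = diag_op (ccz_sign c1 c2 [:: t]) v.
Proof.
move=> neq_c12 neq_c1t neq_c2t; rewrite /ccz_circuit /= !single_op_phase. apply: functional_extensionality => i.
rewrite /diag_op /comp /= (xor_qbitK (indep_qbit_qbit neq_c12)).
have -> : xor_qbit t (qbit c2) (xor_qbit t (qbit c1)
            (xor_qbit t (qbit c2) (xor_qbit t (qbit c1) i))) = i.
  apply: qbit_inj => p; rewrite !qbit_xor_qbit (negbTE neq_c1t) (negbTE neq_c2t).
  by case: eqP => // ->; rewrite !eqxx; case: (qbit t i); case: (qbit c1 i); case: (qbit c2 i).
rewrite !qbit_xor_qbit !eqxx (negbTE neq_c1t) (negbTE neq_c2t).
rewrite /ccz_sign /parity big_seq1 !mulrA.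
case: (qbit c1 i); case: (qbit c2 i); case: (qbit t i) => /=.
all: by rewrite -!exprM -!exprD omega_modn8 ?omega4 ?expr0 ?expr1.
Qed.

Lemma ccz_sign_fan_in c1 c2 t0 rest : c1 != t0 -> c2 != t0 ->
  ccz_sign c1 c2 [:: t0] \o xor_qbit t0 (parity rest) = ccz_sign c1 c2 (t0 :: rest).
Proof.
move=> neq_c1t0 neq_c2t0; apply: functional_extensionality => i.
rewrite /ccz_sign /comp /parity big_seq1 big_cons !qbit_xor_qbit eqxx.
by rewrite (negbTE neq_c1t0) (negbTE neq_c2t0).
Qed.

Definition ccz_parity_circuit c1 c2 t0 rest : seq (gate m) :=
  cnot_fan_in rest t0 ++ ccz_circuit c1 c2 t0 ++ cnot_fan_in rest t0.

Lemma circuit_op_ccz_parity c1 c2 t0 rest v :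
  c1 != c2 -> c1 != t0 -> c2 != t0 -> t0 \notin rest ->
  circuit_op (ccz_parity_circuit c1 c2 t0 rest) v = diag_op (ccz_sign c1 c2 (t0 :: rest)) v.
Proof.
move=> neq_c12 neq_c1t0 neq_c2t0 t0_notin.
rewrite !circuit_op_cat !circuit_op_fan_in // circuit_op_ccz // conj_perm_diag_op.
  by rewrite ccz_sign_fan_in.
exact/xor_qbitK/indep_parity.
Qed.

Definition multi_toffoli_circuit c1 c2 t0 rest : seq (gate m) :=
  hadamards (t0 :: rest) ++ ccz_parity_circuit c1 c2 t0 rest ++ hadamards (t0 :: rest).

Definition gate_within (Q : seq 'I_m) g :=
  gate_ok g /\ {subset gate_qubits g <= Q}.

Lemma hadamards_within Q ts : {subset ts <= Q} ->
  List.Forall (gate_within Q) (hadamards ts).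
Proof.
move=> sub_ts; apply: Forall_map_in => t t_in; split; first exact: hadamard_mx_unitary.
by move=> q; rewrite inE => /eqP->; apply: sub_ts.
Qed.

Lemma fan_in_within Q ss t : t \notin ss -> {subset ss <= Q} -> t \in Q ->
  List.Forall (gate_within Q) (cnot_fan_in ss t).
Proof.
move=> t_notin sub_ss t_in; apply: Forall_map_in => s s_in; split.
  by apply: contraNneq t_notin => <-.
by move=> q; rewrite !inE => /orP[]/eqP->; rewrite ?t_in ?sub_ss.
Qed.

Lemma ccz_circuit_within Q c1 c2 t : c1 != c2 -> c1 != t -> c2 != t ->
  c1 \in Q -> c2 \in Q -> t \in Q -> List.Forall (gate_within Q) (ccz_circuit c1 c2 t).
Proof.
move=> neq_c12 neq_c1t neq_c2t c1_in c2_in t_in.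
have T_unitary : unitary2 (phase_mx omega).
  by apply: phase_mx_unitary; have := omega_unitary 1; rewrite expr1.
have Tdg_unitary : unitary2 (phase_mx (omega ^+ 7)).
  exact/phase_mx_unitary/omega_unitary.
by rewrite /ccz_circuit; repeat constructor; rewrite //= => q;
   rewrite !inE; do ?case/orP; move/eqP->.
Qed.

Lemma multi_toffoli_circuit_within c1 c2 t0 rest :
  c1 != c2 -> c1 \notin t0 :: rest -> c2 \notin t0 :: rest -> t0 \notin rest ->
  List.Forall (gate_within [:: c1, c2, t0 & rest]) (multi_toffoli_circuit c1 c2 t0 rest).
Proof.
rewrite !inE !negb_or => neq_c12 /andP[neq_c1t0 _] /andP[neq_c2t0 _] t0_notin.
have sub_ts : {subset t0 :: rest <= [:: c1, c2, t0 & rest]}.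
  by move=> q q_in; do 2!apply: mem_behead.
have sub_rest : {subset rest <= [:: c1, c2, t0 & rest]}.
  by move=> q q_in; do 3!apply: mem_behead.
have t0_in : t0 \in [:: c1, c2, t0 & rest] by apply/sub_ts/mem_head.
rewrite /multi_toffoli_circuit /ccz_parity_circuit; do !apply: Forall_cat;
  [exact: hadamards_within | exact: fan_in_within | | exact: fan_in_within |
   exact: hadamards_within].
by apply: ccz_circuit_within; rewrite // !inE eqxx ?orbT.
Qed.

Lemma cnot_count_multi_toffoli_circuit c1 c2 t0 rest :
  cnot_count (multi_toffoli_circuit c1 c2 t0 rest) = (2 * size (t0 :: rest) + 4)%N.
Proof.
have hadamards0 ts : count (@is_cnot m) (hadamards ts) = 0%N by elim: ts.
have fan_in_size ss t : count (@is_cnot m) (cnot_fan_in ss t) = size ss.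
  by elim: ss => //= s ss ->.
rewrite /cnot_count !count_cat hadamards0 !fan_in_size /=.
lia.
Qed.

Lemma circuit_mx_multi_toffoli c1 c2 t0 rest :
  c1 != c2 -> c1 \notin t0 :: rest -> c2 \notin t0 :: rest -> uniq (t0 :: rest) ->
  circuit_mx (multi_toffoli_circuit c1 c2 t0 rest) = multi_toffoli_mx c1 c2 (t0 :: rest).
Proof.
move=> neq_c12 c1_notin c2_notin uniq_ts; have /andP[t0_notin _] := uniq_ts.
have neq_c1t0 : c1 != t0 by apply: contraNneq c1_notin => ->; apply: mem_head.
have neq_c2t0 : c2 != t0 by apply: contraNneq c2_notin => ->; apply: mem_head.
have gates_ok := multi_toffoli_circuit_within neq_c12 c1_notin c2_notin t0_notin.
apply: mxv_inj => v.
rewrite mxv_circuit_mx => [|g /(proj1 (List.Forall_forall _ _) gates_ok) []//].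
rewrite mxv_multi_toffoli // /multi_toffoli_circuit 2!circuit_op_cat.
by rewrite circuit_op_ccz_parity.
Qed.

End Circuits.

Theorem lemma5 (m : nat) (c1 c2 : 'I_m) (ts : seq 'I_m) :
  (1 <= size ts)%N ->
  c1 != c2 ->
  uniq ts ->
  c1 \notin ts -> c2 \notin ts ->
  exists gs : seq (gate m),
    [/\ (forall g, List.In g gs ->
            gate_ok g /\ {subset gate_qubits g <= c1 :: c2 :: ts}),
        cnot_count gs = (2 * size ts + 4)%N
      & circuit_mx gs = multi_toffoli_mx c1 c2 ts].
Proof.
case: ts => [|t0 rest] // _ neq_c12 uniq_ts c1_notin c2_notin.
have /andP[t0_notin _] := uniq_ts.
exists (multi_toffoli_circuit c1 c2 t0 rest); split.
- apply/List.Forall_forall; exact: multi_toffoli_circuit_within.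
- exact: cnot_count_multi_toffoli_circuit.
- exact: circuit_mx_multi_toffoli.
Qed.
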